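(* The detour sequence of every unicyclic graph is full; that is, if $G$ is a connected graph containing exactly one cycle and $d_1\le d_2\le \cdots\le d_n$ is its detour sequence, then every integer $k$ with $d_1\le k\le d_n$ equals some $d_j$.
   Context: All graphs are finite and simple. A unicyclic graph is a connected graph with exactly one cycle. The order of a path is its number of vertices. For a vertex $v$ of $G$, $\tau(v)$ is the order of a longest path in $G$ having $v$ as an endvertex. The detour sequence of $G$ is the nondecreasing sequence of the values $\tau(v)$, $v\in V(G)$ (one term per vertex). *)

From mathcomp Require Import all_boot.
Set Implicit Arguments. Unset Strict Implicit. Unset Printing Implicit Defensive.

Definition simple_graph (T : finType) (e : rel T) : Prop :=
  symmetric e /\ irreflexive e.

Definition connected_graph (T : finType) (e : rel T) : Prop :=
  forall x y : T, connect e x y.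

(* A path with vertex sequence x :: p: consecutive vertices adjacent,
   all vertices distinct. Its order is size p + 1. *)
Definition is_path (T : finType) (e : rel T) (x : T) (p : seq T) : bool :=
  path e x p && uniq (x :: p).

(* tau v: the order of a longest path having v as an endvertex.
   Paths have at most #|T| vertices, so the maximum is over p with size < #|T|;
   we range over all tuples of length < #|T|. *)
Definition tau (T : finType) (e : rel T) (v : T) : nat :=
  \max_(n < #|T|) \max_(p : n.-tuple T | is_path e v p) n.+1.

Definition cycle_edges (T : finType) (c : seq T) : {set {set T}} :=
  [set [set x; y] | x in c, y in c & (next c x == y)].

Definition is_cycle (T : finType) (e : rel T) (c : seq T) : bool :=
  (2 < size c) && ucycleb e c.

(* Exactly one cycle: a cycle exists and any two cycles (as subgraphs, i.e.
   determined by their edge sets) coincide. *)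
Definition unicyclic (T : finType) (e : rel T) : Prop :=
  simple_graph e /\ connected_graph e /\
  (exists c, is_cycle e c) /\
  (forall c1 c2, is_cycle e c1 -> is_cycle e c2 ->
     cycle_edges c1 = cycle_edges c2).

Definition detour_seq (T : finType) (e : rel T) : seq nat :=
  sort leq [seq tau e v | v <- enum T].

From mathcomp Require Import all_boot zify.
Set Implicit Arguments. Unset Strict Implicit. Unset Printing Implicit Defensive.

(* Call an edge uv a jump if tau v >= tau u + 2. Walking from a vertex of
   minimal tau to one of maximal tau, a value k is either attained or skipped
   over by a jump uv. A longest path from v must then visit u, but not right
   after v (either would make tau u too large), so it runs v ... u ... w and
   its segment from v to u closes a cycle C with the edge uv; its end w
   satisfies tau w >= tau v > k by reversal. Walking from u to w along the
   path, k is again attained or skipped by a jump u'v' with v' after u. But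
   the head of every jump lies on a cycle, hence on C, which the tail of the
   path avoids. *)

Section DiscreteIVT.
Variables (T : eqType) (e : rel T) (f : T -> nat).

Lemma path_ivt k x p : path e x p -> f x <= k <= f (last x p) ->
  (exists2 y, y \in x :: p & f y = k) \/
  (exists u v, [/\ e u v, v \in p, f u < k & k < f v]).
Proof.
elim: p x => [|y p IHp] x /=; first by move=> _ fxk; left; exists x; rewrite ?inE //; lia.
case/andP=> exy pyp /andP[fx_le_k k_le_last].
have [fx_lt_k | fx_ge_k] := ltnP (f x) k; last by left; exists x; rewrite ?mem_head //; lia.
case: (leqP (f y) k) => [fy_le_k | k_lt_fy]; last by right; exists x, y; rewrite mem_head.
case: (IHp y pyp) => [|[z pz fz] | [u [v [euv pv fu fv]]]]; first by rewrite fy_le_k.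
- by left; exists z; rewrite // inE pz orbT.
- by right; exists u, v; rewrite inE pv orbT.
Qed.

End DiscreteIVT.

Section Detour.
Variables (T : finType) (e : rel T).

Lemma is_path_size_lt v p : is_path e v p -> size p < #|T|.
Proof.
by case/andP=> _ /card_uniqP uniq_vp; have := max_card (mem (v :: p)); rewrite uniq_vp.
Qed.

Lemma leq_size_tau v p : is_path e v p -> (size p).+1 <= tau e v.
Proof.
move=> vp; apply: leq_trans (leq_bigmax_cond (Ordinal (is_path_size_lt vp)) isT).
exact: (@leq_bigmax_cond _ (fun q : (size p).-tuple T => is_path e v q)
          (fun _ => (size p).+1) (in_tuple p) vp).
Qed.

Lemma longest_path v : exists2 p, is_path e v p & (size p).+1 = tau e v.
Proof.
have trivial_path : is_path e v [::] by [].
have T_gt0 : 0 < #|'I_#|T| | by rewrite card_ord (leq_ltn_trans _ (is_path_size_lt trivial_path)).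
have [n tau_n] := eq_bigmax (fun n : 'I_#|T| => \max_(p : n.-tuple T | is_path e v p) n.+1) T_gt0.
have [/existsP[p vp] | no_path] := boolP [exists p : n.-tuple T, is_path e v p].
  have paths_gt0 : 0 < #|[pred q : n.-tuple T | is_path e v q]| by apply/card_gt0P; exists p.
  have [q vq tau_q] := eq_bigmax_cond (fun _ : n.-tuple T => n.+1) paths_gt0.
  by exists q; rewrite // /tau tau_n tau_q size_tuple.
have := leq_size_tau trivial_path; rewrite /tau tau_n big_pred0 // => q.
by apply/negbTE; apply: contra no_path => vq; apply/existsP; exists q.
Qed.

Lemma is_path_rev v p : symmetric e -> is_path e v p ->
  is_path e (last v p) (rev (belast v p)).
Proof.
move=> e_sym /andP[vp uniq_vp]; apply/andP; split.
  by rewrite rev_path (eq_path (e' := e)) // => x y; rewrite /= e_sym.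
by rewrite -rev_rcons rev_uniq -lastI.
Qed.

Lemma leq_size_tau_last v p : symmetric e -> is_path e v p ->
  (size p).+1 <= tau e (last v p).
Proof.
move=> e_sym /(is_path_rev e_sym)/leq_size_tau.
by rewrite size_rev size_belast.
Qed.

Lemma jump_closes_cycle x y : e x y -> (tau e x).+1 < tau e y ->
  exists p1 p2, [/\ is_path e y (p1 ++ x :: p2), (size (p1 ++ x :: p2)).+1 = tau e y
                  & is_cycle e (rcons (y :: p1) x)].
Proof.
move=> exy jump; have [q yq size_q] := longest_path y.
have x_neq_y : x != y by apply: contraTneq jump => ->; lia.
have x_in_q : x \in q.
  apply: contraTT jump => x_notin_q; rewrite -ltnNge.
  have xyq : is_path e x (y :: q).
    by case/andP: yq => yq uniq_yq; rewrite /is_path /= exy yq inE negb_or x_neq_y x_notin_q.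
  by have := leq_size_tau xyq; rewrite /= -size_q; lia.
case/splitPr: x_in_q yq size_q => [[|a p1] p2 yq size_q].
  have : is_path e x p2 by case/andP: yq => /= /andP[_ xp2] /andP[_ uniq_xp2]; apply/andP.
  by move/leq_size_tau; move: size_q jump => /=; lia.
exists (a :: p1), p2; split=> //.
case/andP: yq; rewrite cat_path -cat_cons -cat_rcons cat_uniq.
move=> /andP[yp1 /andP[ex _]] /andP[uniq_cyc _].
rewrite /is_cycle size_rcons /= /ucycleb -rcons_cons uniq_cyc andbT /= !rcons_path.
by move: yp1 ex => /= /andP[-> ->] ->; rewrite last_rcons exy.
Qed.

End Detour.

Lemma mem_cycle_edges_eq (T : finType) (c1 c2 : seq T) :
  cycle_edges c1 = cycle_edges c2 -> {subset c1 <= c2}.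
Proof.
move=> c12 z z_c1.
have : [set z; next c1 z] \in cycle_edges c2.
  by rewrite -c12; apply/imset2P; exists z (next c1 z); rewrite // inE mem_next z_c1 /=.
case/imset2P=> x y x_c2 /[!inE] /andP[y_c2 _] edge.
have : z \in [set x; y] by rewrite -edge set21.
by rewrite in_set2 => /orP[/eqP-> | /eqP->].
Qed.

Section Unicyclic.
Variables (T : finType) (e : rel T).
Hypothesis e_unicyclic : unicyclic e.

Lemma jump_head_on_cycle x y c : e x y -> (tau e x).+1 < tau e y ->
  is_cycle e c -> y \in c.
Proof.
move=> exy jump cyc; have [_ [_ [_ cycle_unique]]] := e_unicyclic.
have [p1 [p2 [_ _ jump_cyc]]] := jump_closes_cycle exy jump.
by apply: (mem_cycle_edges_eq (cycle_unique _ _ jump_cyc cyc)); rewrite mem_head.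
Qed.

Lemma tau_attained_across_edge u v k : e u v -> tau e u < k < tau e v ->
  exists w, tau e w = k.
Proof.
move=> euv /andP[u_lt_k k_lt_v].
have [p1 [p2 [vp size_vp cyc]]] := jump_closes_cycle euv (leq_ltn_trans u_lt_k k_lt_v).
have [[e_sym _] _] := e_unicyclic.
have up2 : path e u p2 by case/andP: vp; rewrite cat_path => /andP[_ /= /andP[_ ->]].
have v_le_end : tau e v <= tau e (last u p2).
  by have := leq_size_tau_last e_sym vp; rewrite last_cat /= size_vp.
have k_range : tau e u <= k <= tau e (last u p2).
  by rewrite (ltnW u_lt_k) (leq_trans (ltnW k_lt_v) v_le_end).
have [[w _ <-] | [u' [v' [eu'v' v'_p2 u'_lt_k k_lt_v']]]] := path_ivt up2 k_range.
  by exists w.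
have v'_cyc := jump_head_on_cycle eu'v' (leq_ltn_trans u'_lt_k k_lt_v') cyc.
case/andP: vp => _; rewrite -cat_cons -cat_rcons cat_uniq => /and3P[_ /hasP tail_off_cycle _].
by case: tail_off_cycle; exists v'.
Qed.

Lemma tau_attains_interval w z k : tau e w <= k <= tau e z -> exists v, tau e v = k.
Proof.
move=> k_range; have [_ [e_connected _]] := e_unicyclic.
case/connectP: (e_connected w z) => p wp z_last; rewrite z_last in k_range.
have [[v _ <-] | [u [v [euv _ u_lt_k k_lt_v]]]] := path_ivt wp k_range; first by exists v.
by apply: tau_attained_across_edge euv _; rewrite u_lt_k.
Qed.

End Unicyclic.

Theorem theorem1p21 (T : finType) (e : rel T) :
  unicyclic e ->
  let d := detour_seq e in
  forall k : nat, nth 0 d 0 <= k <= nth 0 d (size d).-1 ->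
    exists j, j < size d /\ nth 0 d j = k.
Proof.
move=> e_unicyclic d k k_range.
have mem_d n : (n \in d) = (n \in [seq tau e v | v <- enum T]) by rewrite mem_sort.
have d_gt0 : 0 < size d.
  have [_ [_ [[[|x c] // _] _]]] := e_unicyclic.
  by rewrite size_sort size_map -cardE; apply/card_gt0P; exists x.
have /mapP[w _ d_first] : nth 0 d 0 \in [seq tau e v | v <- enum T].
  by rewrite -mem_d mem_nth.
have /mapP[z _ d_last] : nth 0 d (size d).-1 \in [seq tau e v | v <- enum T].
  by rewrite -mem_d mem_nth ?prednK.
rewrite d_first d_last in k_range.
have [v <-] := tau_attains_interval e_unicyclic k_range.
by exists (index (tau e v) d); rewrite index_mem nth_index mem_d map_f ?mem_enum.
Qed.
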